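(* There exists $K_0>0$ such that for every $R>2$ and every $y\in[2,3]$, the function $x\mapsto\sqrt{\iota_R(x,y)}$ is continuously differentiable on $[0,\infty)$ and for all $x\ge0$, $$0\le\partial_x\sqrt{\iota_R(x,y)}\le K_0\sqrt{y-2}\,g_R(x,y),\qquad 0\le\sqrt{\iota_R(x,y)}\le K_0\sqrt{y-2}\,\rho_R(x,y).$$
   Context: Let $\xi$ be a nondecreasing $C^2$ function on $[0,\infty)$ with $\xi(x)=(x-1)^3\vee0$ for $x\in[0,3/2]$ and $\xi(x)=1$ for $x\ge2$. For $x\ge0$, $y\ge2$: $\zeta(x,y)=2x+(yx^{y-1}-2x)\xi(x)$. For $R>2$: $g_R(x,y)=\sqrt{(\partial_x\zeta)(x\wedge R,y)}$, $h_R(x,y)=\int_0^xg_R(s,y)^2\,ds$, $\phi_R(x,y)=\int_0^xh_R(s,y)\,ds$, $\rho_R(x,y)=\int_0^xg_R(s,y)\,ds$, $\iota_R(x,y)=xh_R(x,y)-2\phi_R(x,y)$. *)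

From Stdlib Require Import Reals Lra ClassicalEpsilon.
Open Scope R_scope.

(* Real power x^a for x >= 0, with the convention 0^a = 0 (only used with a >= 0;
   the value at 0 never matters since xi vanishes near 0). *)
Definition rpow (x a : R) : R := if Rlt_dec 0 x then Rpower x a else 0.

Definition deriv_within_nonneg_at (F : R -> R) (x l : R) : Prop :=
  forall eps : R, 0 < eps -> exists delta : R, 0 < delta /\
    forall h : R, h <> 0 -> 0 <= x + h -> Rabs h < delta ->
      Rabs ((F (x + h) - F x) / h - l) < eps.

Definition has_deriv_on_nonneg (F D : R -> R) : Prop :=
  forall x : R, 0 <= x -> deriv_within_nonneg_at F x (D x).

Definition continuous_on_nonneg (D : R -> R) : Prop :=
  forall x : R, 0 <= x -> forall eps : R, 0 < eps -> exists delta : R, 0 < delta /\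
    forall z : R, 0 <= z -> Rabs (z - x) < delta -> Rabs (D z - D x) < eps.

(* The derivative of F at x within [0,+oo) (chosen by epsilon; unique when it exists). *)
Definition deriv_nonneg (F : R -> R) (x : R) : R :=
  epsilon (inhabits 0) (fun l => deriv_within_nonneg_at F x l).

Definition RInt (f : R -> R) (a b : R) : R :=
  match excluded_middle_informative (inhabited (Riemann_integrable f a b)) with
  | left H => RiemannInt (epsilon H (fun _ => True))
  | right _ => 0
  end.

Definition xi_hyp (xi : R -> R) : Prop :=
  (forall x, 0 <= x <= 3/2 -> xi x = Rmax ((x - 1) ^ 3) 0) /\
  (forall x, 2 <= x -> xi x = 1) /\
  (forall x z, 0 <= x -> x <= z -> xi x <= xi z) /\
  (exists xi1 xi2 : R -> R,
     has_deriv_on_nonneg xi xi1 /\ has_deriv_on_nonneg xi1 xi2 /\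
     continuous_on_nonneg xi2).

Definition zeta (xi : R -> R) (x y : R) : R :=
  2 * x + (y * rpow x (y - 1) - 2 * x) * xi x.

Definition dzeta (xi : R -> R) (x y : R) : R :=
  deriv_nonneg (fun t => zeta xi t y) x.

Definition gR (xi : R -> R) (Rr x y : R) : R := sqrt (dzeta xi (Rmin x Rr) y).
Definition hR (xi : R -> R) (Rr x y : R) : R :=
  RInt (fun s => (gR xi Rr s y) ^ 2) 0 x.
Definition phiR (xi : R -> R) (Rr x y : R) : R :=
  RInt (fun s => hR xi Rr s y) 0 x.
Definition rhoR (xi : R -> R) (Rr x y : R) : R :=
  RInt (fun s => gR xi Rr s y) 0 x.
Definition iotaR (xi : R -> R) (Rr x y : R) : R :=
  x * hR xi Rr x y - 2 * phiR xi Rr x y.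

From Pilot Require Import Defs.
From Stdlib Require Import Reals Lra ClassicalEpsilon.
From Coquelicot Require Import Coquelicot.
Open Scope R_scope.

(* Write zeta s = s (2 + P s) with P s = (y s^(y-2) - 2) xi s (called [excess] below), so that
   zeta' = 2 + P + s P'.  Clamping s to [1, R] makes g_R^2, h_R, phi_R, rho_R and iota_R integrals
   of continuous functions, and iota_R' = x g_R^2 - h_R = J u with u = clamp x and
   J u = u^2 P' u >= 0.  So iota_R is nondecreasing, vanishes on [0, 1] and dominates P u.
   The derivative of sqrt iota_R is iota_R' / (2 sqrt iota_R), and its bound amounts to
   (iota_R')^2 <= 4 K^2 (y - 2) g_R^2 iota_R: for u <= 4 this is J^2 <= C (y - 2) zeta' P, and
   for u >= 4 it follows from J u = y (y - 2) u^(y-1) and iota_R >= (y - 2) u^y / 4.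
   For sqrt iota_R itself, iota_R x <= C (y - 2) x^2 u^(y-2), while already the part of rho_R
   over [x/2, x] is at least of order x u^((y-2)/2).  Near x = 1 one has iota_R <= 50 (x - 1)^3
   and iota_R' <= 50 (x - 1)^2, so sqrt iota_R stays C^1 where it starts to grow. *)

Ltac destruct_Rabs := unfold Rabs in *; repeat match goal with
  | |- context [Rcase_abs ?t] => destruct (Rcase_abs t)
  | H : context [Rcase_abs ?t] |- _ => destruct (Rcase_abs t)
  end.

Lemma deriv_within_of_derivable_pt_lim F x l :
  derivable_pt_lim F x l -> deriv_within_nonneg_at F x l.
Proof.
  intros H eps He. destruct (H eps He) as [d Hd].
  exists d. split; [apply cond_pos|]. intros h Hh _ Ha. now apply Hd.
Qed.

Lemma derivable_pt_lim_of_deriv_within F x l :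
  0 < x -> deriv_within_nonneg_at F x l -> derivable_pt_lim F x l.
Proof.
  intros Hx H eps He. destruct (H eps He) as [d [Hd Hd']].
  assert (Hm : 0 < Rmin d x) by (apply Rmin_pos; lra).
  exists (mkposreal _ Hm). intros h Hh Ha; simpl in Ha.
  pose proof (Rmin_l d x). pose proof (Rmin_r d x).
  apply Hd'; auto; destruct_Rabs; lra.
Qed.

Lemma deriv_within_ext F G x l : 0 <= x -> (forall t, 0 <= t -> F t = G t) ->
  deriv_within_nonneg_at F x l -> deriv_within_nonneg_at G x l.
Proof.
  intros Hx E H eps He. destruct (H eps He) as [d [Hd K]].
  exists d. split; auto. intros h Hh Hp Ha. rewrite <- !E by lra. now apply K.
Qed.

Lemma continuity_pt_of_deriv_within F x l :
  0 < x -> deriv_within_nonneg_at F x l -> continuity_pt F x.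
Proof.
  intros Hx H. apply derivable_continuous_pt. exists l.
  now apply derivable_pt_lim_of_deriv_within.
Qed.

Lemma deriv_within_unique_right F G x l1 l2 : 0 <= x ->
  deriv_within_nonneg_at F x l1 -> deriv_within_nonneg_at G x l2 ->
  (exists d, 0 < d /\ forall h, 0 < h < d -> F (x + h) - F x = G (x + h) - G x) ->
  l1 = l2.
Proof.
  intros Hx H1 H2 [d [Hd Heq]].
  destruct (Req_dec l1 l2) as [E|NE]; auto. exfalso.
  set (e := Rabs (l1 - l2) / 2).
  assert (He : 0 < e).
  { assert (0 < Rabs (l1 - l2)) by (apply Rabs_pos_lt; lra). unfold e; lra. }
  destruct (H1 e He) as [d1 [Hd1 K1]]. destruct (H2 e He) as [d2 [Hd2 K2]].
  set (h := Rmin d (Rmin d1 d2) / 2).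
  pose proof (Rmin_l d (Rmin d1 d2)). pose proof (Rmin_r d (Rmin d1 d2)).
  pose proof (Rmin_l d1 d2). pose proof (Rmin_r d1 d2).
  assert (0 < Rmin d (Rmin d1 d2)) by (repeat apply Rmin_pos; lra).
  assert (Hh : 0 < h < d /\ h < d1 /\ h < d2) by (unfold h; lra).
  specialize (K1 h ltac:(lra) ltac:(lra) ltac:(destruct_Rabs; lra)).
  specialize (K2 h ltac:(lra) ltac:(lra) ltac:(destruct_Rabs; lra)).
  rewrite Heq in K1 by lra. unfold e in *.
  revert K1 K2. generalize ((G (x + h) - G x) / h). intros q K1 K2.
  destruct_Rabs; lra.
Qed.

Lemma deriv_within_ge0_of_right_mono F x l : 0 <= x ->
  deriv_within_nonneg_at F x l ->
  (exists d, 0 < d /\ forall h, 0 < h < d -> F x <= F (x + h)) -> 0 <= l.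
Proof.
  intros Hx H [d [Hd Hm]].
  destruct (Rle_lt_dec 0 l) as [|Hl]; auto. exfalso.
  destruct (H (- l) ltac:(lra)) as [d1 [Hd1 K]].
  set (h := Rmin d d1 / 2).
  pose proof (Rmin_l d d1). pose proof (Rmin_r d d1).
  assert (0 < Rmin d d1) by (apply Rmin_pos; lra).
  assert (Hh : 0 < h < d /\ h < d1) by (unfold h; lra).
  specialize (K h ltac:(lra) ltac:(lra) ltac:(destruct_Rabs; lra)).
  specialize (Hm h ltac:(lra)).
  assert (0 <= (F (x + h) - F x) / h) by (apply Rdiv_le_0_compat; lra).
  destruct_Rabs; lra.
Qed.

Lemma continuous_on_nonneg_of_continuity_pt D :
  (forall x, 0 <= x -> continuity_pt D x) -> continuous_on_nonneg D.
Proof.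
  intros HD x Hx eps He. destruct (HD x Hx eps He) as [d [Hd K]].
  exists d. split; auto. intros z Hz Hzx.
  destruct (Req_dec z x) as [->|Hne]; [rewrite Rminus_diag, Rabs_R0; lra|].
  apply (K z). split; [split; [constructor|auto]|exact Hzx].
Qed.

Lemma ex_RInt_cont (f : R -> R) a b : (forall t, continuous f t) -> ex_RInt f a b.
Proof. intros Hf. apply (@ex_RInt_continuous R_CompleteNormedModule). intros; apply Hf. Qed.

Lemma is_derive_RInt_from0 (f : R -> R) x :
  (forall t, continuous f t) -> is_derive (fun z => RInt f 0 z) x (f x).
Proof.
  intros Hf. apply (is_derive_RInt f _ 0).
  - apply filter_forall. intros b. apply (@RInt_correct R_CompleteNormedModule).
    now apply ex_RInt_cont.
  - apply Hf.
Qed.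

Lemma Defs_RInt_eq_RInt (f g : R -> R) a b :
  (forall t, Rmin a b < t < Rmax a b -> f t = g t) -> (forall t, continuous g t) ->
  Defs.RInt f a b = RInt g a b.
Proof.
  intros E Hg. assert (Eg : ex_RInt g a b) by now apply ex_RInt_cont.
  assert (Ef : ex_RInt f a b).
  { eapply (@ex_RInt_ext R_CompleteNormedModule); [|exact Eg]. intros; symmetry; auto. }
  unfold Defs.RInt.
  destruct (excluded_middle_informative (inhabited (Riemann_integrable f a b))) as [I|I].
  - rewrite <- RInt_Reals. now apply (@RInt_ext R_CompleteNormedModule).
  - exfalso. apply I. constructor. exact (ex_RInt_Reals_0 f a b Ef).
Qed.

Lemma RInt_const_R a b c : RInt (fun _ => c) a b = (b - a) * c.
Proof. apply (@RInt_const R_CompleteNormedModule). Qed.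

Lemma RInt_ge_const (f : R -> R) a b c : a <= b -> ex_RInt f a b ->
  (forall t, a < t < b -> c <= f t) -> (b - a) * c <= RInt f a b.
Proof.
  intros Hab Ef Hc. rewrite <- RInt_const_R.
  apply RInt_le; auto. apply ex_RInt_const.
Qed.

Lemma RInt_le_const (f : R -> R) a b c : a <= b -> ex_RInt f a b ->
  (forall t, a < t < b -> f t <= c) -> RInt f a b <= (b - a) * c.
Proof.
  intros Hab Ef Hc. rewrite <- RInt_const_R.
  apply RInt_le; auto. apply ex_RInt_const.
Qed.

Lemma exp_le x z : x <= z -> exp x <= exp z.
Proof. intros [H| ->]; [left; now apply exp_increasing|lra]. Qed.

Lemma Rmult_lt_of_le_div_succ C a e : 0 <= C -> 0 < e -> a <= e / (C + 1) -> C * a < e.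
Proof.
  intros HC He Ha. apply Rle_lt_trans with (C * (e / (C + 1))); [apply Rmult_le_compat_l; lra|].
  apply Rmult_lt_reg_r with (C + 1); [lra|].
  replace (C * (e / (C + 1)) * (C + 1)) with (C * e) by (field; lra). nra.
Qed.

Lemma derivable_pt_lim_sqrt_cube F x C d : 0 < d -> 0 <= C -> F x = 0 ->
  (forall t, Rabs (t - x) < d -> 0 <= F t <= C * Rabs (t - x) ^ 3) ->
  derivable_pt_lim (fun t => sqrt (F t)) x 0.
Proof.
  intros Hd HC Fx HF eps He.
  assert (He2 : 0 < eps ^ 2) by (apply pow_lt; lra).
  assert (Hm : 0 < Rmin d (eps ^ 2 / (C + 1))) by (apply Rmin_pos; [|apply Rdiv_lt_0_compat]; lra).
  exists (mkposreal _ Hm). intros k Hk Ha.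
  change (Rabs k < Rmin d (eps ^ 2 / (C + 1))) in Ha.
  pose proof (Rmin_l d (eps ^ 2 / (C + 1))). pose proof (Rmin_r d (eps ^ 2 / (C + 1))).
  assert (Hk0 : 0 < Rabs k) by now apply Rabs_pos_lt.
  destruct (HF (x + k)) as [F0 F1]; [replace (x + k - x) with k by ring; lra|].
  replace (x + k - x) with k in F1 by ring.
  rewrite Fx, sqrt_0, !Rminus_0_r, Rabs_div, (Rabs_pos_eq (sqrt _))
    by (auto; apply sqrt_pos).
  apply Rlt_div_l; [lra|].
  rewrite <- (sqrt_pow2 (eps * Rabs k)) by (apply Rmult_le_pos; lra).
  apply sqrt_lt_1; [lra|apply pow2_ge_0|].
  pose proof (Rmult_lt_of_le_div_succ C (Rabs k) (eps ^ 2) HC He2 ltac:(lra)).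
  replace ((eps * Rabs k) ^ 2) with (eps ^ 2 * Rabs k ^ 2) by ring.
  replace (C * Rabs k ^ 3) with (C * Rabs k * Rabs k ^ 2) in F1 by ring.
  assert (0 < Rabs k ^ 2) by (apply pow_lt; lra). nra.
Qed.

Lemma continuity_pt_sq_le D x C d : 0 < d -> 0 <= C -> D x = 0 ->
  (forall z, Rabs (z - x) < d -> D z ^ 2 <= C * Rabs (z - x)) -> continuity_pt D x.
Proof.
  intros Hd HC Dx HD eps He.
  assert (He2 : 0 < eps ^ 2) by (apply pow_lt; lra).
  exists (Rmin d (eps ^ 2 / (C + 1))). split; [apply Rmin_pos; [|apply Rdiv_lt_0_compat]; lra|].
  intros z [_ Hz]. change (Rabs (z - x) < Rmin d (eps ^ 2 / (C + 1))) in Hz.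
  change (Rabs (D z - D x) < eps). rewrite Dx, Rminus_0_r.
  pose proof (Rmin_l d (eps ^ 2 / (C + 1))). pose proof (Rmin_r d (eps ^ 2 / (C + 1))).
  pose proof (HD z ltac:(lra)).
  pose proof (Rmult_lt_of_le_div_succ C (Rabs (z - x)) (eps ^ 2) HC He2 ltac:(lra)).
  apply Rsqr_incrst_0; [|apply Rabs_pos|lra].
  rewrite <- Rsqr_abs, !Rsqr_pow2. lra.
Qed.

(* Also covers [b = 0], where division by zero makes the quotient [0]. *)
Lemma div_2sqrt_le a b c : 0 <= a -> 0 <= b -> 0 <= c -> a ^ 2 <= 4 * c * b ->
  0 <= a / (2 * sqrt b) <= sqrt c.
Proof.
  intros Ha Hb Hc Habc. destruct Hb as [Hb| <-].
  - pose proof (sqrt_lt_R0 b Hb).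
    split; [apply Rdiv_le_0_compat; lra|]. apply Rle_div_l; [lra|].
    rewrite <- (sqrt_pow2 a) by lra.
    replace (sqrt c * (2 * sqrt b)) with (sqrt (4 * c * b)).
    + apply sqrt_le_1_alt. lra.
    + rewrite !sqrt_mult by lra.
      replace (sqrt 4) with 2 by (rewrite <- (sqrt_pow2 2) by lra; f_equal; ring). ring.
  - rewrite sqrt_0, Rmult_0_r. unfold Rdiv. rewrite Rinv_0, Rmult_0_r.
    split; [lra|apply sqrt_pos].
Qed.

Section Estimates.

Variables xi Dxi D2xi : R -> R.
Hypothesis xi_low : forall x, 0 <= x <= 3/2 -> xi x = Rmax ((x - 1) ^ 3) 0.
Hypothesis xi_high : forall x, 2 <= x -> xi x = 1.
Hypothesis xi_mono : forall x z, 0 <= x -> x <= z -> xi x <= xi z.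
Hypothesis xi_deriv : has_deriv_on_nonneg xi Dxi.
Hypothesis Dxi_deriv : has_deriv_on_nonneg Dxi D2xi.

Lemma xi_eq0 x : 0 <= x <= 1 -> xi x = 0.
Proof.
  intros Hx. rewrite xi_low by lra. apply Rmax_right.
  replace ((x - 1) ^ 3) with (- (1 - x) ^ 3) by ring.
  assert (0 <= (1 - x) ^ 3) by (apply pow_le; lra). lra.
Qed.

Lemma xi_cube x : 1 <= x <= 3/2 -> xi x = (x - 1) ^ 3.
Proof. intros Hx. rewrite xi_low by lra. apply Rmax_left, pow_le. lra. Qed.

Lemma xi_ge0 x : 0 <= x -> 0 <= xi x.
Proof. intros Hx. rewrite <- (xi_eq0 0) by lra. apply xi_mono; lra. Qed.

Lemma xi_le1 x : 0 <= x -> xi x <= 1.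
Proof.
  intros Hx. rewrite <- (xi_high (Rmax x 2)) by apply Rmax_r.
  apply xi_mono; [lra|apply Rmax_l].
Qed.

Lemma xi_ge_1_8 x : 3/2 <= x -> 1/8 <= xi x.
Proof.
  intros Hx. replace (1/8) with (xi (3/2)) by (rewrite xi_cube by lra; field).
  apply xi_mono; lra.
Qed.

Lemma is_derive_xi x : 0 < x -> is_derive xi x (Dxi x).
Proof.
  intros Hx. apply is_derive_Reals, derivable_pt_lim_of_deriv_within; auto.
  apply xi_deriv. lra.
Qed.

Lemma Derive_xi s : 0 < s -> Derive xi s = Dxi s.
Proof. intros. now apply is_derive_unique, is_derive_xi. Qed.

Lemma ex_derive_xi s : 0 < s -> ex_derive xi s.
Proof. intros. exists (Dxi s). now apply is_derive_xi. Qed.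

Lemma ex_derive_Dxi s : 0 < s -> ex_derive Dxi s.
Proof.
  intros. exists (D2xi s). apply is_derive_Reals, derivable_pt_lim_of_deriv_within; auto.
  apply Dxi_deriv. lra.
Qed.

Lemma Dxi_continuous x : 0 < x -> continuous Dxi x.
Proof.
  intros Hx. apply continuity_pt_filterlim.
  apply (continuity_pt_of_deriv_within _ x (D2xi x)); auto. apply Dxi_deriv. lra.
Qed.

Lemma Dxi_eq_right f l x : 0 <= x -> derivable_pt_lim f x l ->
  (exists d, 0 < d /\ forall h, 0 < h < d -> xi (x + h) - xi x = f (x + h) - f x) ->
  Dxi x = l.
Proof.
  intros Hx Hf. apply (deriv_within_unique_right xi f); auto.
  now apply deriv_within_of_derivable_pt_lim.
Qed.

Lemma Dxi_eq0_low x : 0 <= x < 1 -> Dxi x = 0.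
Proof.
  intros Hx. apply (Dxi_eq_right (fun _ => 0)); [lra|apply derivable_pt_lim_const|].
  exists (1 - x). split; [lra|]. intros h Hh. rewrite !xi_eq0 by lra. ring.
Qed.

Lemma Dxi_cube x : 1 <= x < 3/2 -> Dxi x = 3 * (x - 1) ^ 2.
Proof.
  intros Hx. apply (Dxi_eq_right (fun t => (t - 1) ^ 3)); [lra| |].
  - apply is_derive_Reals. auto_derive; auto. ring.
  - exists (3/2 - x). split; [lra|]. intros h Hh. rewrite !xi_cube by lra. ring.
Qed.

Lemma Dxi_eq0 x : 0 <= x <= 1 -> Dxi x = 0.
Proof.
  intros Hx. destruct (Req_dec x 1) as [->|].
  - rewrite Dxi_cube by lra. ring.
  - apply Dxi_eq0_low. lra.
Qed.

Lemma Dxi_eq0_high x : 2 <= x -> Dxi x = 0.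
Proof.
  intros Hx. apply (Dxi_eq_right (fun _ => 0)); [lra|apply derivable_pt_lim_const|].
  exists 1. split; [lra|]. intros h Hh. rewrite !xi_high by lra. ring.
Qed.

Lemma Dxi_ge0 x : 0 <= x -> 0 <= Dxi x.
Proof.
  intros Hx. apply (deriv_within_ge0_of_right_mono xi x); auto.
  exists 1. split; [lra|]. intros h Hh. apply xi_mono; lra.
Qed.

Lemma Dxi_bounded : exists M, 0 <= M /\ forall c, 1 <= c <= 2 -> Dxi c <= M.
Proof.
  destruct (continuity_ab_maj Dxi 1 2) as [m [Hm1 Hm2]]; [lra| |].
  - intros c Hc. apply continuity_pt_filterlim, Dxi_continuous. lra.
  - exists (Dxi m). split; auto. apply Dxi_ge0. lra.
Qed.

Variable y : R.
Hypothesis Hy : 2 <= y <= 3.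

(* [pwr s] is [s ^ (y - 2)], in a form that is smooth on [0 < s]. *)
Definition pwr s := exp ((y - 2) * ln s).

Lemma pwr_pos s : 0 < pwr s.
Proof. apply exp_pos. Qed.

Lemma pwr_ge1 s : 1 <= s -> 1 <= pwr s.
Proof.
  intros Hs. unfold pwr. rewrite <- exp_0. apply exp_le.
  assert (0 <= ln s) by (rewrite <- ln_1; apply ln_le; lra). nra.
Qed.

Lemma pwr_le s t : 0 < s -> s <= t -> pwr s <= pwr t.
Proof.
  intros Hs Hst. unfold pwr. apply exp_le.
  assert (ln s <= ln t) by (apply ln_le; lra). nra.
Qed.

Lemma pwr_le2 s : 0 < s <= 2 -> pwr s <= 2.
Proof.
  intros Hs. rewrite <- (exp_ln 2) by lra. unfold pwr. apply exp_le.
  assert (ln s <= ln 2) by (apply ln_le; lra).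
  assert (0 < ln 2) by (rewrite <- ln_1; apply ln_increasing; lra).
  destruct (Rle_dec 0 (ln s)); nra.
Qed.

Lemma pwr_mult s t : 0 < s -> 0 < t -> pwr (s * t) = pwr s * pwr t.
Proof. intros. unfold pwr. rewrite ln_mult, <- exp_plus by auto. f_equal. ring. Qed.

Lemma pwr_half s : 0 < s -> pwr s <= 2 * pwr (s / 2).
Proof.
  intros Hs. replace s with (2 * (s / 2)) at 1 by field. rewrite pwr_mult by lra.
  pose proof (pwr_le2 2 ltac:(lra)). pose proof (pwr_pos (s / 2)). nra.
Qed.

Lemma pwr_sub1_le s : 1 <= s <= 2 -> pwr s - 1 <= 2 * (y - 2).
Proof.
  intros Hs. set (v := (y - 2) * ln s).
  assert (ln s <= 1).
  { pose proof (exp_ineq1_le (ln s)). rewrite exp_ln in * by lra. lra. }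
  assert (0 <= ln s) by (rewrite <- ln_1; apply ln_le; lra).
  assert (Hv : 0 <= v <= y - 2) by (unfold v; split; nra).
  pose proof (pwr_le2 s ltac:(lra)).
  pose proof (exp_ineq1_le (- v)).
  assert (exp v * exp (- v) = 1) by (rewrite <- exp_plus, Rplus_opp_r; apply exp_0).
  pose proof (exp_pos (- v)). change (pwr s) with (exp v) in *. nra.
Qed.

Lemma y_pwr_sub2_ge s : 1 <= s -> (y - 2) * pwr s <= y * pwr s - 2.
Proof. intros Hs. pose proof (pwr_ge1 s Hs). nra. Qed.

Lemma y_pwr_sub2_le s : 1 <= s <= 2 -> y * pwr s - 2 <= 6 * (y - 2).
Proof. intros Hs. pose proof (pwr_sub1_le s Hs). pose proof (pwr_le2 s ltac:(lra)). nra. Qed.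

Definition excess s := (y * pwr s - 2) * xi s.
Definition Dexcess s := y * (y - 2) * (pwr s / s) * xi s + (y * pwr s - 2) * Dxi s.
Definition Dzeta s := 2 + (y * (y - 1) * pwr s - 2) * xi s + s * (y * pwr s - 2) * Dxi s.
Definition iota_rate s := s ^ 2 * Dexcess s.

Lemma Dzeta_eq2 s : 0 <= s <= 1 -> Dzeta s = 2.
Proof. intros. unfold Dzeta. rewrite xi_eq0, Dxi_eq0 by lra. ring. Qed.

Lemma excess_eq0 s : 0 <= s <= 1 -> excess s = 0.
Proof. intros. unfold excess. rewrite xi_eq0 by lra. ring. Qed.

Lemma iota_rate_eq0 s : 0 <= s <= 1 -> iota_rate s = 0.
Proof. intros. unfold iota_rate, Dexcess. rewrite xi_eq0, Dxi_eq0 by lra. ring. Qed.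

Lemma Dzeta_eq s : 0 < s -> Dzeta s = 2 + excess s + s * Dexcess s.
Proof. intros. unfold Dzeta, excess, Dexcess. field. lra. Qed.

Lemma iota_rate_eq s : 0 < s ->
  iota_rate s = s * y * (y - 2) * pwr s * xi s + s ^ 2 * (y * pwr s - 2) * Dxi s.
Proof. intros. unfold iota_rate, Dexcess. field. lra. Qed.

Lemma iota_rate_high s : 2 <= s -> iota_rate s = s * y * (y - 2) * pwr s.
Proof. intros. rewrite iota_rate_eq, xi_high, Dxi_eq0_high by lra. ring. Qed.

Lemma excess_ge s : 1 <= s -> (y - 2) * pwr s * xi s <= excess s.
Proof.
  intros Hs. unfold excess. pose proof (y_pwr_sub2_ge s Hs). pose proof (xi_ge0 s ltac:(lra)).
  nra.
Qed.

Lemma excess_ge0 s : 1 <= s -> 0 <= excess s.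
Proof.
  intros Hs. pose proof (excess_ge s Hs). pose proof (pwr_pos s). pose proof (xi_ge0 s ltac:(lra)).
  assert (0 <= (y - 2) * pwr s) by nra. nra.
Qed.

Lemma Dexcess_ge0 s : 1 <= s -> 0 <= Dexcess s.
Proof.
  intros Hs. unfold Dexcess. pose proof (y_pwr_sub2_ge s Hs).
  pose proof (xi_ge0 s ltac:(lra)). pose proof (Dxi_ge0 s ltac:(lra)). pose proof (pwr_pos s).
  assert (0 <= pwr s / s) by (apply Rdiv_le_0_compat; lra).
  assert (0 <= y * (y - 2) * (pwr s / s)) by (apply Rmult_le_pos; nra).
  assert (0 <= y * pwr s - 2) by nra.
  apply Rplus_le_le_0_compat; apply Rmult_le_pos; lra.
Qed.

Lemma iota_rate_ge0 s : 1 <= s -> 0 <= iota_rate s.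
Proof. intros. apply Rmult_le_pos; [apply pow2_ge_0|now apply Dexcess_ge0]. Qed.

Lemma Dzeta_ge2 s : 0 <= s -> 2 <= Dzeta s.
Proof.
  intros Hs. destruct (Rle_dec s 1); [rewrite Dzeta_eq2; lra|].
  pose proof (excess_ge0 s ltac:(lra)). pose proof (Dexcess_ge0 s ltac:(lra)).
  rewrite Dzeta_eq by lra. nra.
Qed.

Lemma Dzeta_ge_2pwr s : 2 <= s -> 2 * pwr s <= Dzeta s.
Proof.
  intros Hs. unfold Dzeta. rewrite xi_high, Dxi_eq0_high by lra.
  pose proof (pwr_ge1 s ltac:(lra)). assert (2 <= y * (y - 1)) by nra. nra.
Qed.

Lemma Dzeta_ge_pwr s : 1 <= s -> pwr s <= Dzeta s.
Proof.
  intros Hs. destruct (Rle_dec s 2).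
  - pose proof (pwr_le2 s ltac:(lra)). pose proof (Dzeta_ge2 s ltac:(lra)). lra.
  - pose proof (Dzeta_ge_2pwr s ltac:(lra)). pose proof (pwr_pos s). lra.
Qed.

Lemma is_derive_excess s : 0 < s -> is_derive excess s (Dexcess s).
Proof.
  intros. unfold excess, Dexcess, pwr. auto_derive.
  - repeat split; auto. now apply ex_derive_xi.
  - rewrite Derive_xi by lra. field. lra.
Qed.

Lemma is_derive_zeta_form s : 0 < s -> is_derive (fun t => t * (2 + excess t)) s (Dzeta s).
Proof.
  intros. unfold Dzeta, excess, pwr. auto_derive.
  - repeat split; auto. now apply ex_derive_xi.
  - rewrite Derive_xi by lra. field. lra.
Qed.

Lemma Dzeta_continuous s : 0 < s -> continuous Dzeta s.
Proof.
  intros. apply (@ex_derive_continuous R_AbsRing R_NormedModule). unfold Dzeta, pwr.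
  auto_derive. repeat split; auto; [apply ex_derive_xi|apply ex_derive_Dxi]; auto.
Qed.

Lemma Dexcess_continuous s : 0 < s -> continuous Dexcess s.
Proof.
  intros. apply (@ex_derive_continuous R_AbsRing R_NormedModule). unfold Dexcess, pwr.
  auto_derive. repeat split; auto; try lra; [apply ex_derive_xi|apply ex_derive_Dxi]; auto.
Qed.

Lemma zeta_eq t : 0 < t -> zeta xi t y = t * (2 + excess t).
Proof.
  intros. unfold zeta, rpow, excess, pwr. destruct (Rlt_dec 0 t); [|lra].
  unfold Rpower. replace ((y - 1) * ln t) with (ln t + (y - 2) * ln t) by ring.
  rewrite exp_plus, exp_ln by auto. ring.
Qed.

Lemma zeta_deriv_within s : 0 <= s ->
  deriv_within_nonneg_at (fun t => zeta xi t y) s (Dzeta s).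
Proof.
  intros [Hs| <-].
  - apply deriv_within_of_derivable_pt_lim, is_derive_Reals.
    apply (is_derive_ext_loc (fun t => t * (2 + excess t))); [|now apply is_derive_zeta_form].
    exists (mkposreal s Hs). intros t Ht. rewrite zeta_eq; auto.
    unfold ball in Ht; simpl in Ht. unfold AbsRing_ball, abs, minus, plus, opp in Ht; simpl in Ht.
    destruct_Rabs; lra.
  - rewrite Dzeta_eq2 by lra. intros eps He. exists 1. split; [lra|].
    intros h Hh Hp Ha. assert (0 < h < 1) by (destruct_Rabs; lra).
    unfold zeta. rewrite !Rplus_0_l, xi_eq0, (xi_eq0 0) by lra.
    replace ((2 * h + (y * rpow h (y - 1) - 2 * h) * 0
      - (2 * 0 + (y * rpow 0 (y - 1) - 2 * 0) * 0)) / h - 2) with 0 by (field; lra).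
    rewrite Rabs_R0. lra.
Qed.

Lemma dzeta_eq s : 0 <= s -> dzeta xi s y = Dzeta s.
Proof.
  intros Hs. unfold dzeta, deriv_nonneg.
  assert (Ex : exists l, deriv_within_nonneg_at (fun t => zeta xi t y) s l)
    by (exists (Dzeta s); now apply zeta_deriv_within).
  apply (deriv_within_unique_right (fun t => zeta xi t y) (fun t => zeta xi t y) s); auto.
  - exact (epsilon_spec (inhabits 0) _ Ex).
  - now apply zeta_deriv_within.
  - exists 1. split; [lra|]. reflexivity.
Qed.

Lemma excess_near1 u : 1 <= u <= 3/2 -> (y - 2) * (u - 1) ^ 3 <= excess u.
Proof.
  intros Hu. pose proof (excess_ge u ltac:(lra)) as E. rewrite xi_cube in E by lra.
  pose proof (pwr_ge1 u ltac:(lra)). assert (0 <= (u - 1) ^ 3) by (apply pow_le; lra).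
  assert (0 <= (y - 2) * (u - 1) ^ 3) by (apply Rmult_le_pos; lra). nra.
Qed.

Lemma iota_rate_near1 u : 1 <= u <= 5/4 -> iota_rate u <= 50 * (u - 1) ^ 2.
Proof.
  intros Hu. rewrite iota_rate_eq, xi_cube, Dxi_cube by lra.
  pose proof (pwr_ge1 u ltac:(lra)). pose proof (pwr_le2 u ltac:(lra)).
  pose proof (y_pwr_sub2_le u ltac:(lra)). pose proof (y_pwr_sub2_ge u ltac:(lra)).
  set (t := u - 1). assert (0 <= t <= 1/4) by (unfold t; lra).
  assert (0 <= u * y * (y - 2) * pwr u <= 12).
  { replace (u * y * (y - 2) * pwr u) with ((u * y) * ((y - 2) * pwr u)) by ring.
    assert (0 <= (y - 2) * pwr u <= 2) by (split; [apply Rmult_le_pos|]; nra).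
    assert (0 <= u * y <= 4) by nra. split; [apply Rmult_le_pos|]; nra. }
  assert (0 <= t ^ 3 <= t ^ 2 / 4) by (split; [apply pow_le; lra|nra]).
  assert (0 <= u ^ 2 * (y * pwr u - 2) <= 12) by (split; [apply Rmult_le_pos|]; nra).
  assert (0 <= t ^ 2) by apply pow2_ge_0.
  nra.
Qed.

Variable M : R.
Hypothesis M_ge0 : 0 <= M.
Hypothesis Dxi_le_M : forall c, 1 <= c <= 2 -> Dxi c <= M.

Definition C_rate := 3 + 12 * M.
Definition C_Dxi := 8 * M ^ 2 + 5.
Definition C_rate_sq := 288 + 96 * C_Dxi.

Lemma C_rate_ge0 : 0 <= C_rate.
Proof. unfold C_rate. lra. Qed.

Lemma C_Dxi_ge0 : 0 <= C_Dxi.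
Proof. unfold C_Dxi. pose proof (pow2_ge_0 M). lra. Qed.

Lemma C_rate_sq_ge0 : 0 <= C_rate_sq.
Proof. unfold C_rate_sq. pose proof C_Dxi_ge0. lra. Qed.

Lemma iota_rate_le u : 1 <= u -> iota_rate u <= (y - 2) * C_rate * u * pwr u.
Proof.
  intros Hu. rewrite iota_rate_eq by lra. unfold C_rate.
  pose proof (pwr_ge1 u Hu). pose proof (xi_ge0 u ltac:(lra)). pose proof (xi_le1 u ltac:(lra)).
  pose proof (Dxi_ge0 u ltac:(lra)).
  assert (0 <= u * (y - 2) * pwr u) by (repeat apply Rmult_le_pos; lra).
  assert (u * y * (y - 2) * pwr u * xi u <= (y - 2) * 3 * u * pwr u).
  { replace (u * y * (y - 2) * pwr u * xi u) with ((u * (y - 2) * pwr u) * (y * xi u)) by ring.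
    assert (y * xi u <= 3) by nra. nra. }
  assert (u ^ 2 * (y * pwr u - 2) * Dxi u <= (y - 2) * 12 * M * u * pwr u).
  { destruct (Rle_dec u 2).
    - pose proof (y_pwr_sub2_le u ltac:(lra)). pose proof (y_pwr_sub2_ge u ltac:(lra)).
      pose proof (Dxi_le_M u ltac:(lra)).
      assert (0 <= (y - 2) * pwr u) by (apply Rmult_le_pos; lra).
      assert ((y * pwr u - 2) * Dxi u <= 6 * (y - 2) * M) by (apply Rmult_le_compat; lra).
      assert (u ^ 2 * ((y * pwr u - 2) * Dxi u) <= 2 * u * (6 * (y - 2) * M))
        by (apply Rmult_le_compat; nra).
      assert (0 <= (y - 2) * M * u) by (repeat apply Rmult_le_pos; lra).
      nra.
    - rewrite Dxi_eq0_high by lra.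
      assert (0 <= (y - 2) * M * u * pwr u) by (repeat apply Rmult_le_pos; lra). nra. }
  lra.
Qed.

Lemma Dxi_sq_le u : 1 <= u <= 2 -> Dxi u ^ 2 <= C_Dxi * xi u.
Proof.
  intros Hu. unfold C_Dxi. destruct (Rlt_dec u (3/2)).
  - rewrite Dxi_cube, xi_cube by lra. set (t := u - 1).
    assert (0 <= t <= 1/2) by (unfold t; lra).
    assert (0 <= M ^ 2) by apply pow2_ge_0. assert (0 <= t ^ 3) by (apply pow_le; lra).
    assert (9 * t ^ 4 <= 5 * t ^ 3) by nra. nra.
  - pose proof (xi_ge_1_8 u ltac:(lra)). pose proof (Dxi_le_M u Hu).
    pose proof (Dxi_ge0 u ltac:(lra)). assert (Dxi u ^ 2 <= M ^ 2) by nra. nra.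
Qed.

Section RateSquare.

Variable u : R.
Hypothesis Hu : 1 <= u <= 4.
Let Q := (y - 2) * Dzeta u * excess u.

Lemma pwr_sq_xi_le : (y - 2) ^ 2 * pwr u ^ 2 * xi u <= Q.
Proof.
  pose proof (pwr_ge1 u ltac:(lra)). pose proof (excess_ge u ltac:(lra)).
  pose proof (Dzeta_ge_pwr u ltac:(lra)). pose proof (excess_ge0 u ltac:(lra)).
  assert (0 <= (y - 2) * pwr u) by (apply Rmult_le_pos; lra).
  assert ((y - 2) * pwr u * ((y - 2) * pwr u * xi u) <= (y - 2) * pwr u * excess u)
    by (apply Rmult_le_compat_l; lra).
  assert ((y - 2) * pwr u * excess u <= Q)
    by (unfold Q; apply Rmult_le_compat_r; [|apply Rmult_le_compat_l]; lra).
  nra.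
Qed.

Lemma rate_xi_part_sq : (u * y * (y - 2) * pwr u * xi u) ^ 2 <= 144 * Q.
Proof.
  pose proof pwr_sq_xi_le. pose proof (xi_ge0 u ltac:(lra)). pose proof (xi_le1 u ltac:(lra)).
  replace ((u * y * (y - 2) * pwr u * xi u) ^ 2)
    with ((u * y) ^ 2 * xi u * ((y - 2) ^ 2 * pwr u ^ 2 * xi u)) by ring.
  assert (0 <= (y - 2) ^ 2 * pwr u ^ 2 * xi u)
    by (apply Rmult_le_pos; [apply Rmult_le_pos; apply pow2_ge_0|lra]).
  assert ((u * y) ^ 2 <= 144) by (assert (0 <= u * y <= 12) by nra; nra).
  assert ((u * y) ^ 2 * xi u <= 144) by (pose proof (pow2_ge_0 (u * y)); nra).
  assert (0 <= (u * y) ^ 2 * xi u) by (apply Rmult_le_pos; [apply pow2_ge_0|lra]).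
  nra.
Qed.

Lemma rate_Dxi_part_sq : (u ^ 2 * (y * pwr u - 2) * Dxi u) ^ 2 <= 48 * C_Dxi * Q.
Proof.
  pose proof C_Dxi_ge0.
  pose proof (Dzeta_ge2 u ltac:(lra)). pose proof (excess_ge0 u ltac:(lra)).
  assert (0 <= C_Dxi * (y - 2) * excess u) by (apply Rmult_le_pos; [apply Rmult_le_pos|]; lra).
  assert (C_Dxi * (y - 2) * excess u * 2 <= C_Dxi * (y - 2) * excess u * Dzeta u)
    by (apply Rmult_le_compat_l; lra).
  destruct (Rle_dec u 2).
  - pose proof (Dxi_sq_le u ltac:(lra)). pose proof (xi_ge0 u ltac:(lra)).
    pose proof (y_pwr_sub2_le u ltac:(lra)). pose proof (y_pwr_sub2_ge u ltac:(lra)).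
    pose proof (pwr_ge1 u ltac:(lra)).
    assert (0 <= y * pwr u - 2) by nra.
    assert ((y * pwr u - 2) * Dxi u ^ 2 <= 6 * (y - 2) * (C_Dxi * xi u))
      by (apply Rmult_le_compat; try lra; apply pow2_ge_0).
    assert (0 <= u ^ 4 <= 16) by (split; [apply pow_le; lra|]; assert (u ^ 2 <= 4) by nra; nra).
    assert (u ^ 4 * (y * pwr u - 2) * ((y * pwr u - 2) * Dxi u ^ 2)
      <= 16 * (y * pwr u - 2) * (6 * (y - 2) * (C_Dxi * xi u))).
    { apply Rmult_le_compat; try (apply Rmult_le_pos; lra); [|nra|auto].
      apply Rmult_le_pos; [lra|apply pow2_ge_0]. }
    replace ((u ^ 2 * (y * pwr u - 2) * Dxi u) ^ 2)
      with (u ^ 4 * (y * pwr u - 2) * ((y * pwr u - 2) * Dxi u ^ 2)) by ring.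
    unfold Q, excess in *. nra.
  - rewrite Dxi_eq0_high by lra. unfold Q. nra.
Qed.

End RateSquare.

Lemma iota_rate_sq_le u : 1 <= u <= 4 ->
  iota_rate u ^ 2 <= C_rate_sq * (y - 2) * Dzeta u * excess u.
Proof.
  intros Hu. rewrite iota_rate_eq by lra.
  pose proof (rate_xi_part_sq u Hu). pose proof (rate_Dxi_part_sq u Hu).
  set (A1 := u * y * (y - 2) * pwr u * xi u) in *.
  set (A2 := u ^ 2 * (y * pwr u - 2) * Dxi u) in *.
  pose proof (pow2_ge_0 (A1 - A2)). unfold C_rate_sq. nra.
Qed.

Variable Rr : R.
Hypothesis Rr_ge2 : 2 <= Rr.

Definition clamp x := Rmax 1 (Rmin x Rr).

Lemma clamp_range x : 1 <= clamp x <= Rr.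
Proof. unfold clamp, Rmax, Rmin. repeat destruct Rle_dec; lra. Qed.

Lemma clamp_id x : 1 <= x <= Rr -> clamp x = x.
Proof. intros. unfold clamp, Rmax, Rmin. repeat destruct Rle_dec; lra. Qed.

Lemma clamp_low x : x <= 1 -> clamp x = 1.
Proof. intros. unfold clamp, Rmax, Rmin. repeat destruct Rle_dec; lra. Qed.

Lemma clamp_high x : Rr <= x -> clamp x = Rr.
Proof. intros. unfold clamp, Rmax, Rmin. repeat destruct Rle_dec; lra. Qed.

Lemma clamp_le x z : x <= z -> clamp x <= clamp z.
Proof. intros. unfold clamp, Rmax, Rmin. repeat destruct Rle_dec; lra. Qed.

Lemma clamp_le_self x : 1 <= x -> clamp x <= x.
Proof. intros. unfold clamp, Rmax, Rmin. repeat destruct Rle_dec; lra. Qed.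

Lemma clamp_half x : clamp x / 2 <= clamp (x / 2).
Proof. unfold clamp, Rmax, Rmin. repeat destruct Rle_dec; lra. Qed.

Lemma clamp_continuous x : continuous clamp x.
Proof.
  apply continuity_pt_filterlim. intros eps He. exists eps. split; auto.
  intros z [_ Hz]. simpl in *. unfold R_dist in *. eapply Rle_lt_trans; [|exact Hz].
  unfold clamp, Rmax, Rmin. repeat destruct Rle_dec; destruct_Rabs; lra.
Qed.

(* Continuous versions of [gR ^ 2], [hR], [phiR], [rhoR] and [iotaR], defined on all of [R]. *)
Definition gsq x := Dzeta (clamp x).
Definition h x := RInt gsq 0 x.
Definition phi x := RInt h 0 x.
Definition rho x := RInt (fun s => sqrt (gsq s)) 0 x.
Definition iota x := x * h x - 2 * phi x.
Definition Diota x := iota_rate (clamp x).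

Lemma gsq_continuous x : continuous gsq x.
Proof.
  apply (continuous_comp clamp Dzeta); [apply clamp_continuous|].
  apply Dzeta_continuous. pose proof (clamp_range x). lra.
Qed.

Lemma sqrt_gsq_continuous x : continuous (fun s => sqrt (gsq s)) x.
Proof. apply (continuous_comp gsq sqrt); [apply gsq_continuous|apply continuous_sqrt]. Qed.

Lemma gsq_ge2 x : 2 <= gsq x.
Proof. apply Dzeta_ge2. pose proof (clamp_range x). lra. Qed.

Lemma gsq_low x : x <= 1 -> gsq x = 2.
Proof. intros. unfold gsq. rewrite clamp_low by lra. apply Dzeta_eq2. lra. Qed.

Lemma is_derive_h x : is_derive h x (gsq x).
Proof. apply is_derive_RInt_from0, gsq_continuous. Qed.

Lemma h_continuous x : continuous h x.
Proof.
  apply (@ex_derive_continuous R_AbsRing R_NormedModule). exists (gsq x). apply is_derive_h.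
Qed.

Lemma is_derive_phi x : is_derive phi x (h x).
Proof. apply is_derive_RInt_from0, h_continuous. Qed.

Lemma h_low x : x <= 1 -> h x = 2 * x.
Proof.
  intros Hx. unfold h. rewrite ((@RInt_ext R_CompleteNormedModule) gsq (fun _ => 2)).
  - rewrite RInt_const_R. simpl. ring.
  - intros t Ht. apply gsq_low. pose proof (Rmax_lub 0 x 1). lra.
Qed.

Lemma h_mid x : 1 <= x <= Rr -> h x = x * (2 + excess x).
Proof.
  intros Hx. unfold h.
  rewrite <- ((@RInt_Chasles R_CompleteNormedModule) gsq 0 1 x)
    by (apply ex_RInt_cont, gsq_continuous).
  fold (h 1). rewrite h_low by lra.
  rewrite ((@RInt_ext R_CompleteNormedModule) gsq Dzeta).
  - rewrite ((@is_RInt_unique R_CompleteNormedModule) Dzeta 1 x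
      (minus (x * (2 + excess x)) (1 * (2 + excess 1)))).
    + rewrite (excess_eq0 1) by lra. unfold minus, plus, opp; simpl. ring.
    + apply ((@is_RInt_derive R_CompleteNormedModule) (fun t => t * (2 + excess t)));
        intros t Ht;
        rewrite Rmin_left, Rmax_right in Ht by lra;
        [apply is_derive_zeta_form|apply Dzeta_continuous]; lra.
  - intros t Ht. rewrite Rmin_left, Rmax_right in Ht by lra.
    unfold gsq. rewrite clamp_id by lra. reflexivity.
Qed.

Lemma h_high x : Rr <= x -> h x = h Rr + (x - Rr) * Dzeta Rr.
Proof.
  intros Hx. unfold h.
  rewrite <- ((@RInt_Chasles R_CompleteNormedModule) gsq 0 Rr x)
    by (apply ex_RInt_cont, gsq_continuous).
  rewrite ((@RInt_ext R_CompleteNormedModule) gsq (fun _ => Dzeta Rr) Rr x).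
  - rewrite RInt_const_R. reflexivity.
  - intros t Ht. rewrite Rmin_left, Rmax_right in Ht by lra.
    unfold gsq. rewrite clamp_high by lra. reflexivity.
Qed.

Lemma Diota_eq x : x * gsq x - h x = Diota x.
Proof.
  unfold Diota. destruct (Rle_dec x 1).
  - rewrite gsq_low, h_low, clamp_low, iota_rate_eq0 by lra. ring.
  - unfold gsq. destruct (Rle_dec x Rr).
    + rewrite clamp_id, h_mid by lra. unfold iota_rate. rewrite Dzeta_eq by lra. ring.
    + rewrite clamp_high, h_high, h_mid by lra. unfold iota_rate. rewrite Dzeta_eq by lra. ring.
Qed.

Lemma Diota_continuous x : continuous Diota x.
Proof.
  apply (continuous_ext (fun t => t * gsq t - h t)); [apply Diota_eq|].
  apply (continuous_minus (fun t => t * gsq t) h); [|apply h_continuous].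
  apply (continuous_mult (fun t => t) gsq); [apply continuous_id|apply gsq_continuous].
Qed.

Lemma is_derive_iota x : is_derive iota x (Diota x).
Proof.
  rewrite <- Diota_eq. unfold iota. auto_derive.
  - split; [|split; [|exact I]].
    + exists (gsq x). apply is_derive_h.
    + exists (h x). apply is_derive_phi.
  - rewrite (is_derive_unique (fun t : R => h t) x (gsq x)) by apply is_derive_h.
    rewrite (is_derive_unique (fun t : R => phi t) x (h x)) by apply is_derive_phi. ring.
Qed.

Lemma ex_RInt_Diota a b : ex_RInt Diota a b.
Proof. apply ex_RInt_cont, Diota_continuous. Qed.

Lemma iota_diff u v : iota v - iota u = RInt Diota u v.
Proof.
  rewrite ((@is_RInt_unique R_CompleteNormedModule) Diota u v (minus (iota v) (iota u))).
  - reflexivity.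
  - apply (@is_RInt_derive R_CompleteNormedModule);
      intros; [apply is_derive_iota|apply Diota_continuous].
Qed.

Lemma Diota_ge0 x : 0 <= Diota x.
Proof. apply iota_rate_ge0. apply clamp_range. Qed.

Lemma iota_le u v : u <= v -> iota u <= iota v.
Proof.
  intros Huv. pose proof (iota_diff u v).
  assert (0 <= RInt Diota u v)
    by (apply RInt_ge_0; auto; [apply ex_RInt_Diota|intros; apply Diota_ge0]).
  lra.
Qed.

Lemma Diota_eq0 x : x <= 1 -> Diota x = 0.
Proof. intros. unfold Diota. rewrite clamp_low by lra. apply iota_rate_eq0. lra. Qed.

Lemma iota_eq0 x : x <= 1 -> iota x = 0.
Proof.
  intros Hx. assert (iota 0 = 0).
  { unfold iota, phi. rewrite (@RInt_point R_CompleteNormedModule). unfold zero; simpl. ring. }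
  pose proof (iota_diff 0 x) as E.
  rewrite ((@RInt_ext R_CompleteNormedModule) Diota (fun _ => 0)), RInt_const_R in E.
  - lra.
  - intros t Ht. apply Diota_eq0. pose proof (Rmax_lub 0 x 1). lra.
Qed.

Lemma RInt_Dexcess u : 1 <= u -> RInt Dexcess 1 u = excess u.
Proof.
  intros Hu.
  rewrite ((@is_RInt_unique R_CompleteNormedModule) Dexcess 1 u (minus (excess u) (excess 1))).
  - rewrite (excess_eq0 1) by lra. unfold minus, plus, opp; simpl. ring.
  - apply (@is_RInt_derive R_CompleteNormedModule); intros t Ht;
      rewrite Rmin_left, Rmax_right in Ht by lra;
      [apply is_derive_excess|apply Dexcess_continuous]; lra.
Qed.

Lemma iota_ge_excess x : excess (clamp x) <= iota x.
Proof.
  destruct (Rle_dec x 1).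
  - rewrite clamp_low, excess_eq0, iota_eq0 by lra. lra.
  - pose proof (clamp_range x). pose proof (clamp_le_self x ltac:(lra)).
    set (u := clamp x) in *. pose proof (iota_le u x ltac:(lra)).
    pose proof (iota_diff 1 u) as E. rewrite (iota_eq0 1) in E by lra.
    assert (RInt Dexcess 1 u <= RInt Diota 1 u).
    { apply RInt_le; [lra| |apply ex_RInt_Diota|].
      - apply (@ex_RInt_continuous R_CompleteNormedModule). intros z Hz.
        rewrite Rmin_left, Rmax_right in Hz by lra. apply Dexcess_continuous. lra.
      - intros t Ht. unfold Diota, iota_rate. rewrite clamp_id by lra.
        pose proof (Dexcess_ge0 t ltac:(lra)). assert (1 <= t ^ 2) by nra. nra. }
    rewrite RInt_Dexcess in * by lra. lra.
Qed.

Lemma iota_ge_cube t : 1 <= t <= 3/2 -> (y - 2) * (t - 1) ^ 3 <= iota t.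
Proof.
  intros Ht. pose proof (iota_ge_excess t) as E. rewrite clamp_id in E by lra.
  pose proof (excess_near1 t Ht). lra.
Qed.

Lemma iota_pos x : 2 < y -> 1 < x -> 0 < iota x.
Proof.
  intros Hy2 Hx. set (t := Rmin x (5/4)).
  assert (1 < t <= x /\ t <= 5/4) by (unfold t, Rmin; destruct Rle_dec; lra).
  pose proof (iota_le t x ltac:(lra)). pose proof (iota_ge_cube t ltac:(lra)).
  assert (0 < (t - 1) ^ 3) by (apply pow_lt; lra).
  assert (0 < (y - 2) * (t - 1) ^ 3) by (apply Rmult_lt_0_compat; lra). lra.
Qed.

Lemma iota_ge_big x : 4 <= clamp x -> (y - 2) * clamp x ^ 2 * pwr (clamp x) / 4 <= iota x.
Proof.
  intros Hu. assert (Hx : 1 <= x).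
  { destruct (Rle_dec 1 x); auto. rewrite clamp_low in Hu; lra. }
  pose proof (clamp_range x). pose proof (clamp_le_self x Hx). set (u := clamp x) in *.
  pose proof (iota_le u x ltac:(lra)). pose proof (iota_diff (u / 2) u).
  pose proof (iota_le 0 (u / 2) ltac:(lra)) as E. rewrite iota_eq0 in E by lra.
  assert ((u - u / 2) * ((y - 2) * u * pwr u / 2) <= RInt Diota (u / 2) u).
  { apply RInt_ge_const; [lra|apply ex_RInt_Diota|]. intros t Ht.
    unfold Diota. rewrite clamp_id, iota_rate_high by lra.
    pose proof (pwr_half u ltac:(lra)). pose proof (pwr_le (u / 2) t ltac:(lra) ltac:(lra)).
    assert (u / 2 * (pwr u / 2) <= t * pwr t)
      by (apply Rmult_le_compat; pose proof (pwr_pos u); lra).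
    assert (0 <= t * pwr t) by (pose proof (pwr_pos t); apply Rmult_le_pos; lra).
    assert ((y - 2) * (u / 2 * (pwr u / 2)) <= (y - 2) * (t * pwr t))
      by (apply Rmult_le_compat_l; lra).
    assert ((y - 2) * (t * pwr t) * 2 <= (y - 2) * (t * pwr t) * y)
      by (apply Rmult_le_compat_l; [apply Rmult_le_pos|]; lra).
    lra. }
  lra.
Qed.

Lemma iota_le_cube x t : x <= 1 -> t <= 5/4 -> iota t <= 50 * Rabs (t - x) ^ 3.
Proof.
  intros Hx Ht. destruct (Rle_dec t 1).
  - rewrite iota_eq0 by lra. pose proof (pow_le (Rabs (t - x)) 3 (Rabs_pos _)). lra.
  - pose proof (iota_diff 1 t) as E. rewrite (iota_eq0 1) in E by lra.
    assert (RInt Diota 1 t <= (t - 1) * (50 * (t - 1) ^ 2)).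
    { apply RInt_le_const; [lra|apply ex_RInt_Diota|]. intros s Hs.
      unfold Diota. rewrite clamp_id by lra. pose proof (iota_rate_near1 s ltac:(lra)).
      assert ((s - 1) ^ 2 <= (t - 1) ^ 2) by (apply pow_incr; lra). lra. }
    assert ((t - 1) ^ 3 <= Rabs (t - x) ^ 3)
      by (apply pow_incr; split; [lra|]; destruct_Rabs; lra).
    lra.
Qed.

Lemma iota_le_sq x : 1 <= x -> iota x <= (y - 2) * C_rate * x ^ 2 * pwr (clamp x).
Proof.
  intros Hx. pose proof (iota_diff 0 x) as E. rewrite (iota_eq0 0) in E by lra.
  assert (RInt Diota 0 x <= (x - 0) * ((y - 2) * C_rate * x * pwr (clamp x))).
  { apply RInt_le_const; [lra|apply ex_RInt_Diota|]. intros t Ht.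
    pose proof (clamp_range t). pose proof (iota_rate_le (clamp t) ltac:(lra)).
    pose proof (clamp_le t x ltac:(lra)). pose proof (clamp_le_self x Hx).
    pose proof (pwr_le (clamp t) (clamp x) ltac:(lra) ltac:(lra)). pose proof (pwr_pos (clamp t)).
    assert (0 <= (y - 2) * C_rate) by (apply Rmult_le_pos; [|apply C_rate_ge0]; lra).
    assert (clamp t * pwr (clamp t) <= x * pwr (clamp x)) by (apply Rmult_le_compat; lra).
    assert ((y - 2) * C_rate * (clamp t * pwr (clamp t)) <= (y - 2) * C_rate * (x * pwr (clamp x)))
      by (apply Rmult_le_compat_l; lra).
    unfold Diota. lra. }
  nra.
Qed.

Lemma rho_ge0 x : 0 <= x -> 0 <= rho x.
Proof.
  intros. apply RInt_ge_0; auto; [apply ex_RInt_cont, sqrt_gsq_continuous|intros; apply sqrt_pos].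
Qed.

Lemma rho_sq_ge x : 0 <= x -> x ^ 2 * pwr (clamp x) / 8 <= rho x ^ 2.
Proof.
  intros Hx. set (q := pwr (clamp x) / 2). pose proof (clamp_range x).
  assert (Hq : 0 < q) by (unfold q; pose proof (pwr_pos (clamp x)); lra).
  assert (E : (x - x / 2) * sqrt q <= RInt (fun s => sqrt (gsq s)) (x / 2) x).
  { apply RInt_ge_const; [lra|apply ex_RInt_cont, sqrt_gsq_continuous|]. intros t Ht.
    apply sqrt_le_1_alt. pose proof (clamp_range t).
    pose proof (Dzeta_ge_pwr (clamp t) ltac:(lra)).
    pose proof (clamp_le (x / 2) t ltac:(lra)). pose proof (clamp_half x).
    pose proof (pwr_le (clamp x / 2) (clamp t) ltac:(lra) ltac:(lra)).
    pose proof (pwr_half (clamp x) ltac:(lra)). unfold gsq, q. lra. }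
  assert (0 <= RInt (fun s => sqrt (gsq s)) 0 (x / 2)).
  { apply RInt_ge_0; [lra|apply ex_RInt_cont, sqrt_gsq_continuous|intros; apply sqrt_pos]. }
  assert (rho x = RInt (fun s => sqrt (gsq s)) 0 (x / 2) + RInt (fun s => sqrt (gsq s)) (x / 2) x).
  { unfold rho. rewrite <- ((@RInt_Chasles R_CompleteNormedModule) _ 0 (x / 2) x);
      [reflexivity|apply ex_RInt_cont, sqrt_gsq_continuous..]. }
  assert (0 <= x / 2 * sqrt q) by (apply Rmult_le_pos; [lra|apply sqrt_pos]).
  assert (E2 : (x / 2 * sqrt q) ^ 2 <= rho x ^ 2) by (apply pow_incr; lra).
  replace ((x / 2 * sqrt q) ^ 2) with (x ^ 2 / 4 * (sqrt q * sqrt q)) in E2 by field.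
  rewrite sqrt_sqrt in E2 by lra. unfold q in E2. lra.
Qed.

Lemma iota_le_rho_sq x : 0 <= x -> iota x <= 8 * C_rate * (y - 2) * rho x ^ 2.
Proof.
  intros Hx. pose proof C_rate_ge0.
  destruct (Rle_dec x 1).
  - rewrite iota_eq0 by lra. pose proof (pow2_ge_0 (rho x)).
    apply Rmult_le_pos; [apply Rmult_le_pos|]; lra.
  - pose proof (iota_le_sq x ltac:(lra)). pose proof (rho_sq_ge x Hx).
    assert (0 <= (y - 2) * C_rate) by (apply Rmult_le_pos; lra).
    assert ((y - 2) * C_rate * (x ^ 2 * pwr (clamp x)) <= (y - 2) * C_rate * (8 * rho x ^ 2))
      by (apply Rmult_le_compat_l; lra).
    lra.
Qed.

Lemma Diota_sq_le x : Diota x ^ 2 <= (C_rate_sq + 18) * (y - 2) * gsq x * iota x.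
Proof.
  unfold Diota, gsq. pose proof (clamp_range x). pose proof (iota_ge_excess x).
  set (u := clamp x) in *.
  pose proof (Dzeta_ge2 u ltac:(lra)). pose proof (excess_ge0 u ltac:(lra)).
  pose proof C_rate_sq_ge0.
  assert (0 <= (y - 2) * Dzeta u) by (apply Rmult_le_pos; lra).
  assert (0 <= (y - 2) * Dzeta u * iota x) by (apply Rmult_le_pos; lra).
  destruct (Rle_dec u 4).
  - pose proof (iota_rate_sq_le u ltac:(lra)).
    assert ((y - 2) * Dzeta u * excess u <= (y - 2) * Dzeta u * iota x)
      by (apply Rmult_le_compat_l; lra).
    nra.
  - rewrite iota_rate_high by lra. pose proof (iota_ge_big x ltac:(fold u; lra)) as B. fold u in B.
    pose proof (Dzeta_ge_2pwr u ltac:(lra)). pose proof (pwr_pos u).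
    assert (0 <= y - 2) by lra. set (r := pwr u) in *. set (a := y - 2) in *.
    assert (0 <= a * u ^ 2 * r / 4).
    { pose proof (pow2_ge_0 u). assert (0 <= a * u ^ 2) by (apply Rmult_le_pos; lra).
      assert (0 <= a * u ^ 2 * r) by (apply Rmult_le_pos; lra). lra. }
    assert (a * (2 * r) * (a * u ^ 2 * r / 4) <= a * Dzeta u * iota x)
      by (apply Rmult_le_compat; try lra; [apply Rmult_le_pos|apply Rmult_le_compat_l]; lra).
    assert ((u * y * a * r) ^ 2 <= 18 * (a * (2 * r) * (a * u ^ 2 * r / 4))).
    { replace (18 * (a * (2 * r) * (a * u ^ 2 * r / 4))) with (9 * (a * u * r) ^ 2) by field.
      replace ((u * y * a * r) ^ 2) with (y ^ 2 * (a * u * r) ^ 2) by ring.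
      apply Rmult_le_compat_r; [apply pow2_ge_0|nra]. }
    nra.
Qed.

Definition K_sq := 8 * C_rate + C_rate_sq + 18.

Lemma iota_ge0 x : 0 <= iota x.
Proof.
  destruct (Rle_dec x 1); [rewrite iota_eq0; lra|].
  rewrite <- (iota_eq0 1) by lra. apply iota_le. lra.
Qed.

Lemma Diota_eq0_y2 x : y = 2 -> Diota x = 0.
Proof.
  intros Ey. pose proof (Diota_sq_le x). rewrite Ey, Rminus_diag, Rmult_0_r, !Rmult_0_l in H.
  pose proof (pow2_ge_0 (Diota x)). apply (Rsqr_eq_0 (Diota x)). unfold Rsqr. simpl in *. lra.
Qed.

Lemma iota_eq0_y2 x : y = 2 -> iota x = 0.
Proof.
  intros Ey. pose proof (iota_diff 0 x) as E. rewrite (iota_eq0 0) in E by lra.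
  rewrite ((@RInt_ext R_CompleteNormedModule) Diota (fun _ => 0)), RInt_const_R in E.
  - lra.
  - intros t _. now apply Diota_eq0_y2.
Qed.

(* Where [iota x = 0], division by zero gives [D x = 0], the derivative of [sqrt o iota] there. *)
Definition D x := Diota x / (2 * sqrt (iota x)).

Lemma D_eq0 x : iota x = 0 -> D x = 0.
Proof. intros E. unfold D. rewrite E, sqrt_0, Rmult_0_r. unfold Rdiv. rewrite Rinv_0. ring. Qed.

Lemma D_sq_le_near x z : 2 < y -> x <= 1 -> Rabs (z - x) < 1/4 ->
  D z ^ 2 <= 625 / (y - 2) * Rabs (z - x).
Proof.
  intros Hy2 Hx Hz.
  assert (0 <= 625 / (y - 2) * Rabs (z - x))
    by (apply Rmult_le_pos; [apply Rdiv_le_0_compat|apply Rabs_pos]; lra).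
  destruct (Rle_dec z 1).
  - rewrite D_eq0 by (now apply iota_eq0). simpl. lra.
  - assert (Hw : 0 < z - 1 <= Rabs (z - x)) by (destruct_Rabs; lra).
    pose proof (iota_pos z Hy2 ltac:(lra)) as Hi.
    pose proof (iota_ge_cube z ltac:(destruct_Rabs; lra)).
    pose proof (iota_rate_near1 z ltac:(destruct_Rabs; lra)). pose proof (Diota_ge0 z).
    unfold Diota in *. rewrite clamp_id in * by (destruct_Rabs; lra).
    unfold D, Diota. rewrite clamp_id by (destruct_Rabs; lra).
    set (w := z - 1) in *. pose proof (sqrt_lt_R0 _ Hi).
    replace ((iota_rate z / (2 * sqrt (iota z))) ^ 2)
      with (iota_rate z ^ 2 / (4 * sqrt (iota z) ^ 2)) by (field; lra).
    rewrite pow2_sqrt by lra.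
    apply Rle_div_l; [lra|].
    assert (iota_rate z ^ 2 <= 2500 * w ^ 4)
      by (replace (2500 * w ^ 4) with ((50 * w ^ 2) ^ 2) by ring; apply pow_incr; lra).
    assert (Hc : 0 < 625 / (y - 2)) by (apply Rdiv_lt_0_compat; lra).
    assert (0 <= (y - 2) * w ^ 3) by (apply Rmult_le_pos; [|apply pow_le]; lra).
    assert (w * ((y - 2) * w ^ 3) <= Rabs (z - x) * iota z) by (apply Rmult_le_compat; lra).
    assert (625 / (y - 2) * (w * ((y - 2) * w ^ 3)) <= 625 / (y - 2) * (Rabs (z - x) * iota z))
      by (apply Rmult_le_compat_l; lra).
    replace (2500 * w ^ 4) with (4 * (625 / (y - 2) * (w * ((y - 2) * w ^ 3)))) in *
      by (field; lra).
    lra.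
Qed.

Lemma derivable_pt_lim_sqrt_iota x : derivable_pt_lim (fun t => sqrt (iota t)) x (D x).
Proof.
  destruct (Rlt_dec 0 (iota x)) as [Hi|Hi].
  - apply is_derive_Reals, (is_derive_sqrt iota x (Diota x)); [apply is_derive_iota|auto].
  - assert (E : iota x = 0) by (pose proof (iota_ge0 x); lra). rewrite D_eq0 by auto.
    destruct (Req_dec y 2) as [Ey|Ey].
    + apply (derivable_pt_lim_sqrt_cube _ _ 0 1); try lra. intros t _.
      rewrite iota_eq0_y2 by auto. simpl. lra.
    + assert (x <= 1) by (destruct (Rle_dec x 1); auto; pose proof (iota_pos x ltac:(lra)); lra).
      apply (derivable_pt_lim_sqrt_cube _ _ 50 (1/4)); try lra. intros t Ht.
      split; [apply iota_ge0|apply iota_le_cube; auto; destruct_Rabs; lra].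
Qed.

Lemma D_continuous_gt1 x : 2 < y -> 1 < x -> continuous D x.
Proof.
  intros Hy2 Hx. pose proof (sqrt_lt_R0 _ (iota_pos x Hy2 Hx)). unfold D, Rdiv.
  apply (continuous_mult Diota (fun z => / (2 * sqrt (iota z)))); [apply Diota_continuous|].
  apply (continuous_Rinv_comp (fun z => 2 * sqrt (iota z))); [|lra].
  apply (continuous_mult (fun _ => 2) (fun z => sqrt (iota z))); [apply continuous_const|].
  apply (continuous_comp iota sqrt); [|apply continuous_sqrt].
  apply (@ex_derive_continuous R_AbsRing R_NormedModule). exists (Diota x). apply is_derive_iota.
Qed.

Lemma continuity_pt_D x : continuity_pt D x.
Proof.
  destruct (Req_dec y 2) as [Ey|Ey].
  - apply (continuity_pt_sq_le _ _ 0 1); try lra; [now apply D_eq0, iota_eq0_y2|].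
    intros z _. rewrite D_eq0 by now apply iota_eq0_y2. simpl. lra.
  - destruct (Rle_dec x 1).
    + apply (continuity_pt_sq_le _ _ (625 / (y - 2)) (1/4)); try lra.
      * apply Rdiv_le_0_compat; lra.
      * now apply D_eq0, iota_eq0.
      * intros z Hz. apply D_sq_le_near; lra.
    + apply continuity_pt_filterlim, D_continuous_gt1; lra.
Qed.

Lemma D_bound x : 0 <= D x <= sqrt K_sq * sqrt (y - 2) * sqrt (gsq x).
Proof.
  pose proof C_rate_ge0.
  pose proof C_rate_sq_ge0.
  pose proof (gsq_ge2 x). pose proof (iota_ge0 x).
  rewrite <- !sqrt_mult by (try apply Rmult_le_pos; unfold K_sq; lra).
  apply div_2sqrt_le; [apply Diota_ge0|auto|repeat apply Rmult_le_pos; unfold K_sq; lra|].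
  pose proof (Diota_sq_le x).
  assert (0 <= (y - 2) * gsq x * iota x) by (repeat apply Rmult_le_pos; lra).
  assert ((C_rate_sq + 18) * ((y - 2) * gsq x * iota x) <= 4 * K_sq * ((y - 2) * gsq x * iota x))
    by (apply Rmult_le_compat_r; unfold K_sq; lra).
  lra.
Qed.

Lemma sqrt_iota_bound x : 0 <= x -> sqrt (iota x) <= sqrt K_sq * sqrt (y - 2) * rho x.
Proof.
  intros Hx. pose proof (rho_ge0 x Hx). pose proof C_rate_ge0.
  pose proof C_rate_sq_ge0.
  rewrite <- (sqrt_pow2 (rho x)), <- !sqrt_mult
    by (try apply Rmult_le_pos; try apply pow2_ge_0; unfold K_sq; lra).
  apply sqrt_le_1_alt. pose proof (iota_le_rho_sq x Hx).
  assert (0 <= (y - 2) * rho x ^ 2) by (apply Rmult_le_pos; [lra|apply pow2_ge_0]).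
  assert (8 * C_rate * ((y - 2) * rho x ^ 2) <= K_sq * ((y - 2) * rho x ^ 2))
    by (apply Rmult_le_compat_r; unfold K_sq; lra).
  lra.
Qed.

Lemma gR_eq x : 0 <= x -> gR xi Rr x y = sqrt (gsq x).
Proof.
  intros Hx. unfold gR, gsq, clamp. rewrite dzeta_eq by (apply Rmin_glb; lra). f_equal.
  destruct (Rle_dec 1 (Rmin x Rr)).
  - now rewrite Rmax_right.
  - rewrite Rmax_left, !Dzeta_eq2 by (try split; try apply Rmin_glb; lra). reflexivity.
Qed.

Lemma hR_eq x : 0 <= x -> hR xi Rr x y = h x.
Proof.
  intros Hx. apply Defs_RInt_eq_RInt; [|apply gsq_continuous]. intros t Ht.
  rewrite Rmin_left in Ht by lra. rewrite gR_eq by lra. apply pow2_sqrt.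
  pose proof (gsq_ge2 t). lra.
Qed.

Lemma iotaR_eq x : 0 <= x -> iotaR xi Rr x y = iota x.
Proof.
  intros Hx. unfold iotaR, iota, phiR. rewrite hR_eq by auto. do 2 f_equal.
  apply Defs_RInt_eq_RInt; [|apply h_continuous]. intros t Ht.
  rewrite Rmin_left in Ht by lra. apply hR_eq. lra.
Qed.

Lemma rhoR_eq x : 0 <= x -> rhoR xi Rr x y = rho x.
Proof.
  intros Hx. apply Defs_RInt_eq_RInt; [|apply sqrt_gsq_continuous]. intros t Ht.
  rewrite Rmin_left in Ht by lra. apply gR_eq. lra.
Qed.

Lemma sqrt_iotaR_smooth_bounded : exists D : R -> R,
  has_deriv_on_nonneg (fun x => sqrt (iotaR xi Rr x y)) D /\
  continuous_on_nonneg D /\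
  forall x : R, 0 <= x ->
    (0 <= D x <= sqrt K_sq * sqrt (y - 2) * gR xi Rr x y) /\
    (0 <= sqrt (iotaR xi Rr x y) <= sqrt K_sq * sqrt (y - 2) * rhoR xi Rr x y).
Proof.
  exists D. split; [|split].
  - intros x Hx. apply (deriv_within_ext (fun t => sqrt (iota t))); auto.
    + intros t Ht. now rewrite iotaR_eq.
    + apply deriv_within_of_derivable_pt_lim, derivable_pt_lim_sqrt_iota.
  - apply continuous_on_nonneg_of_continuity_pt. intros; apply continuity_pt_D.
  - intros x Hx. rewrite gR_eq, iotaR_eq, rhoR_eq by auto.
    split; [apply D_bound|split; [apply sqrt_pos|now apply sqrt_iota_bound]].
Qed.

End Estimates.

Theorem mainTheorem17 (xi : R -> R) (Hxi : xi_hyp xi) :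
  exists K0 : R, 0 < K0 /\
    forall Rr y : R, 2 < Rr -> 2 <= y <= 3 ->
      exists D : R -> R,
        has_deriv_on_nonneg (fun x => sqrt (iotaR xi Rr x y)) D /\
        continuous_on_nonneg D /\
        forall x : R, 0 <= x ->
          (0 <= D x <= K0 * sqrt (y - 2) * gR xi Rr x y) /\
          (0 <= sqrt (iotaR xi Rr x y) <= K0 * sqrt (y - 2) * rhoR xi Rr x y).
Proof.
  destruct Hxi as [xi_low [xi_high [xi_mono [Dxi [D2xi [xi_deriv [Dxi_deriv _]]]]]]].
  destruct (Dxi_bounded xi Dxi D2xi xi_mono xi_deriv Dxi_deriv) as [M [HM0 HM]].
  exists (sqrt (K_sq M)). split.
  - apply sqrt_lt_R0. unfold K_sq, C_rate, C_rate_sq, C_Dxi. pose proof (pow2_ge_0 M). lra.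
  - intros Rr y HR Hy.
    exact (sqrt_iotaR_smooth_bounded xi Dxi D2xi xi_low xi_high xi_mono xi_deriv Dxi_deriv
      y Hy M HM0 HM Rr ltac:(lra)).
Qed.
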